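(* Assume (A1), (C1) and (D4) hold, let $\hat x$ be the point in (D4), and let $\{(x^k,y^k)\}$ be generated by the LSAAL algorithm described in the context. Then there exists $\varepsilon_0>0$ such that for all positive integers $\tilde k\le k-1$, $$\mathbb{E}\big[\langle y^k,G(\hat x,\xi_k)\rangle\,\big|\,\mathcal{F}_{\tilde k}\big]\le-\varepsilon_0\,\mathbb{E}\big[\|y^k\|\,\big|\,\mathcal{F}_{\tilde k}\big].$$
   Context: $\mathcal{Y}$ is a finite-dimensional Hilbert space, $\mathcal{K}\subset\mathcal{Y}$ a closed convex cone, $\mathcal{K}^\circ=\{v:\langle v,w\rangle\le0\ \forall w\in\mathcal{K}\}$ its polar cone, $\Pi_{\mathcal{K}^\circ}$ the metric projection. $X\subset\mathbb{R}^n$ nonempty convex compact, contained in an open convex set $\mathcal{O}$. $\xi$ random vector supported on $\Xi\subseteq\mathbb{R}^q$; $F:\mathcal{O}\times\Xi\to\mathbb{R}$, $G:\mathcal{O}\times\Xi\to\mathcal{Y}$ smooth in $x$ for each $\xi$, with gradient $\nabla_xF$, derivative $\mathrm{D}_xG$; $f(x)=\mathbb{E}[F(x,\xi)]$, $g(x)=\mathbb{E}[G(x,\xi)]$. (A1) Samples $\xi_1,\xi_2,\dots$ are i.i.d. copies of $\xi$. (C1) $\mathbb{E}[\nabla_xF(x,\xi)]=\nabla f(x)$ and $\mathbb{E}[\mathrm{D}_xG(x,\xi)]=\mathrm{D}g(x)$ for $x\in\mathcal{O}$. (D4) (Slater) There is $\hat x\in\mathrm{int}\,X$ with $g(\hat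 x)\in\mathrm{int}\,\mathcal{K}$. LSAAL algorithm: $x^1\in X$, $y^1=0$, $\sigma>0$; for $k\ge1$: $l_f^k(x)=F(x^k,\xi_k)+\langle\nabla_xF(x^k,\xi_k),x-x^k\rangle$, $l_g^k(x)=G(x^k,\xi_k)+\mathrm{D}_xG(x^k,\xi_k)(x-x^k)$, $l_\sigma^k(x,y)=l_f^k(x)+\frac{1}{2\sigma}[\|\Pi_{\mathcal{K}^\circ}(y+\sigma l_g^k(x))\|^2-\|y\|^2]$, $x^{k+1}=\mathrm{argmin}_{x\in X}\{l_\sigma^k(x,y^k)+\frac{1}{2\sigma}\|x-x^k\|^2\}$, $y^{k+1}=\Pi_{\mathcal{K}^\circ}(y^k+\sigma l_g^k(x^{k+1}))$. $\mathcal{F}_k$ denotes the $\sigma$-algebra generated by $\xi_1,\dots,\xi_{k-1}$ ($\mathcal{F}_1$ trivial), so that $(x^k,y^k)$ is $\mathcal{F}_k$-measurable. *)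

From HB Require Import structures.
From mathcomp Require Import all_boot all_order all_algebra.
From mathcomp Require Import all_classical all_reals all_analysis.
Set Implicit Arguments. Unset Strict Implicit. Unset Printing Implicit Defensive.
Import Order.TTheory GRing.Theory Num.Theory.
Import numFieldNormedType.Exports.
Local Open Scope classical_set_scope.
Local Open Scope ring_scope.

Section Defs.
Context {R : realType}.

Definition dotp {m : nat} (u v : 'rV[R]_m) : R := \sum_(i < m) u ord0 i * v ord0 i.
Definition enorm {m : nat} (v : 'rV[R]_m) : R := Num.sqrt (dotp v v).

Definition is_cone {m : nat} (K : set 'rV[R]_m) : Prop :=
  K 0 /\ forall t v, 0 <= t -> K v -> K (t *: v).

Definition polar {m : nat} (K : set 'rV[R]_m) : set 'rV[R]_m :=
  [set v | forall w, K w -> dotp v w <= 0].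

Definition is_proj {m : nat} (C : set 'rV[R]_m) (v p : 'rV[R]_m) : Prop :=
  C p /\ forall w, C w -> enorm (v - p) <= enorm (v - w).

(* metric projection onto C (the unique nearest point when C is nonempty closed convex) *)
Definition proj {m : nat} (C : set 'rV[R]_m) (v : 'rV[R]_m) : 'rV[R]_m :=
  xget 0 [set p | is_proj C v p].


Local Open Scope ereal_scope.

(* sigma-algebra F_k generated by xi_1, ..., xi_{k-1} (F_1 = {emptyset, T}) *)
Definition filtr {d dS} {T : measurableType d} {S : measurableType dS}
  (xi : nat -> T -> S) (k : nat) : set (set T) :=
  <<s [set A | exists i B, (0 < i < k)%N /\ measurable B /\ A = xi i @^-1` B] >>.

Definition meas_wrt {T : Type} (Fs : set (set T)) (f : T -> R) : Prop :=
  forall B : set R, measurable B -> Fs (f @^-1` B).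

(* Y is (a version of) the conditional expectation E[Xr | Fs], Fs a sub-sigma-algebra *)
Definition is_cond_exp {d} {T : measurableType d} (P : probability T R)
  (Fs : set (set T)) (Xr Y : T -> R) : Prop :=
  P.-integrable setT (EFin \o Xr) /\ meas_wrt Fs Y /\
  P.-integrable setT (EFin \o Y) /\
  forall A, Fs A -> \int[P]_(w in A) (Y w)%:E = \int[P]_(w in A) (Xr w)%:E.

(* (A1): xi_1, xi_2, ... are i.i.d. copies of xi0 (indices start at 1) *)
Definition iid_copies {d dS} {T : measurableType d} {S : measurableType dS}
  (P : probability T R) (xi0 : T -> S) (xi : nat -> T -> S) : Prop :=
  measurable_fun setT xi0 /\
  (forall k, (0 < k)%N -> measurable_fun setT (xi k)) /\
  (forall k B, (0 < k)%N -> measurable B -> P (xi k @^-1` B) = P (xi0 @^-1` B)) /\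
  (forall (I : seq nat) (B : nat -> set S), uniq I -> all (fun i => 0 < i)%N I ->
     (forall i, measurable (B i)) ->
     P (\bigcap_(i in [set` I]) (xi i @^-1` B i)) = \prod_(i <- I) P (xi i @^-1` B i)).

Local Close Scope ereal_scope.

Definition Escal {d dS} {T : measurableType d} {S : measurableType dS}
  (P : probability T R) (xi0 : T -> S) (H : S -> R) : R :=
  fine ('E_P[fun w => H (xi0 w)])%E.
Definition Emx {d dS} {T : measurableType d} {S : measurableType dS} {p q : nat}
  (P : probability T R) (xi0 : T -> S) (H : S -> 'M[R]_(p, q)) : 'M[R]_(p, q) :=
  \matrix_(i, j) Escal P xi0 (fun s => H s i j).

(* The LSAAL iteration (indices k >= 1), pathwise for every sample point w. *)
Definition LSAAL {d dS} {T : measurableType d} {S : measurableType dS} {n m : nat}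
  (X : set 'rV[R]_n) (K : set 'rV[R]_m)
  (F : 'rV[R]_n -> S -> R) (G : 'rV[R]_n -> S -> 'rV[R]_m)
  (gradF : 'rV[R]_n -> S -> 'rV[R]_n) (DG : 'rV[R]_n -> S -> 'M[R]_(n, m))
  (sigma : R) (x1 : 'rV[R]_n) (xi : nat -> T -> S)
  (x : nat -> T -> 'rV[R]_n) (y : nat -> T -> 'rV[R]_m) : Prop :=
  let lf k w z := F (x k w) (xi k w) + dotp (gradF (x k w) (xi k w)) (z - x k w) in
  let lg k w z := G (x k w) (xi k w) + (z - x k w) *m DG (x k w) (xi k w) in
  let lsig k w z yy := lf k w z +
      (enorm (proj (polar K) (yy + sigma *: lg k w z)) ^+ 2 - enorm yy ^+ 2) / (2 * sigma) in
  let obj k w z := lsig k w z (y k w) + enorm (z - x k w) ^+ 2 / (2 * sigma) in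
  X x1 /\ 0 < sigma /\
  (forall w, x 1%N w = x1) /\ (forall w, y 1%N w = 0) /\
  forall k w, (0 < k)%N ->
    (X (x k.+1 w) /\ forall z, X z -> obj k w (x k.+1 w) <= obj k w z) /\
    y k.+1 w = proj (polar K) (y k w + sigma *: lg k w (x k.+1 w)).

End Defs.

From Pilot Require Import Defs.
From HB Require Import structures.
From mathcomp Require Import all_boot all_order all_algebra.
From mathcomp Require Import all_classical all_reals all_analysis.
From mathcomp Require Import lra measurable_realfun.
Import Order.TTheory GRing.Theory Num.Theory.
Import numFieldNormedType.Exports.
Local Open Scope classical_set_scope.
Local Open Scope ring_scope.

(* Since g(xhat) = E[G(xhat, xi)] is interior to K, there is eps > 0 with
   <v, g(xhat)> <= - eps |v| for every v in the polar cone, and every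
   multiplier y^k lies in the polar cone, being a projection onto it.  As y^k
   is F_k-measurable while xi_k is independent of F_k and distributed as xi,
   for every event A of F_kt (a sub-sigma-algebra of F_k) we get
   E[1_A <y^k, G(xhat, xi_k)>] = E[1_A <y^k, g(xhat)>] <= - eps E[1_A |y^k|];
   an inequality between the integrals over all events of F_kt passes to the
   conditional expectations almost surely. *)

Section euclidean.
Context {R : realType} {m : nat}.
Implicit Types (u v g : 'rV[R]_m) (K : set 'rV[R]_m).

Lemma dotp_ge0 v : 0 <= dotp v v.
Proof. by apply: sumr_ge0 => i _; rewrite -expr2 sqr_ge0. Qed.

Lemma enorm_ge0 v : 0 <= enorm v.
Proof. exact: sqrtr_ge0. Qed.

Lemma enorm_sqr v : enorm v ^+ 2 = dotp v v.
Proof. by rewrite sqr_sqrtr // dotp_ge0. Qed.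

Lemma coord_le_enorm v j : `|v ord0 j| <= enorm v.
Proof.
rewrite -sqrtr_sqr; apply: ler_wsqrtr.
rewrite /dotp (bigD1 j) //= -expr2 lerDl.
by apply: sumr_ge0 => i _; rewrite -expr2 sqr_ge0.
Qed.

Lemma dotpDZr v u g (c : R) : dotp v (u + c *: g) = dotp v u + c * dotp v g.
Proof.
rewrite /dotp mulr_sumr -big_split /=; apply: eq_bigr => i _.
by rewrite !mxE mulrDr mulrCA.
Qed.

Lemma normr_dotp_le v g : `|dotp v g| <= (\sum_i `|g ord0 i|) * enorm v.
Proof.
apply: le_trans (ler_norm_sum _ _ _) _; rewrite mulr_suml; apply: ler_sum => i _.
by rewrite normrM mulrC ler_wpM2l // coord_le_enorm.
Qed.

Lemma polar0 K : polar K 0.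
Proof. by move=> w _; rewrite /dotp big1 // => i _; rewrite mxE mul0r. Qed.

Lemma polar_proj K v : polar K (Defs.proj (polar K) v).
Proof. by rewrite /Defs.proj; case: xgetP => [p _ []|_] //; exact: polar0. Qed.

(* A ball of radius e around g lies in K; testing v in the polar against the
   point g + (e / 2) v / |v| of that ball gives the bound. *)
Lemma interior_polar_dotp_le K g : interior K g ->
  exists2 e : R, 0 < e & forall v, polar K v -> dotp v g <= - e * enorm v.
Proof.
move=> /nbhs_ballP [e e0 gK]; exists (e / 2); first by rewrite divr_gt0.
move=> v Kv; have [v0|vn0] := eqVneq (enorm v) 0.
  have vj0 j : v ord0 j = 0 by apply/eqP; rewrite -normr_le0 -v0 coord_le_enorm.
  by rewrite v0 mulr0 /dotp big1 // => i _; rewrite vj0 mul0r.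
have vgt0 : 0 < enorm v by rewrite lt0r vn0 enorm_ge0.
set c := e / 2 / enorm v.
have c0 : 0 < c by rewrite !divr_gt0.
have cv : c * enorm v = e / 2 by rewrite -mulrA mulVf ?mulr1.
have K_shift : K (g + c *: v).
  apply: gK; split => // i j; rewrite (ord1 i) !mxE /ball /= opprD addNKr normrN normrM.
  rewrite (gtr0_norm c0); apply: (le_lt_trans (y := c * enorm v)).
    by rewrite ler_wpM2l ?coord_le_enorm // ltW.
  by rewrite cv ltr_pdivrMr // ltr_pMr // ltr1n.
have := Kv _ K_shift; rewrite dotpDZr -enorm_sqr expr2 mulrA cv mulNr; lra.
Qed.

End euclidean.

Lemma LSAAL_y_polar {R : realType} {d dS} {T : measurableType d}
    {S : measurableType dS} {n m : nat} {X : set 'rV[R]_n} {K : set 'rV[R]_m}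
    {F G gradF DG} {sigma : R} {x1} {xi : nat -> T -> S} {x y} :
  LSAAL X K F G gradF DG sigma x1 xi x y -> forall k w, (0 < k)%N -> polar K (y k w).
Proof.
move=> [_ [_ [_ [y1 step]]]] [//|[|k]] w _; first by rewrite y1; exact: polar0.
by have [_ ->] := step k.+1 w isT; exact: polar_proj.
Qed.

Lemma bigcap_seq_cons {T : Type} {I : eqType} (F : I -> set T) (a : I) (s : seq I) :
  \bigcap_(i in [set` (a :: s)]) F i = F a `&` \bigcap_(i in [set` s]) F i.
Proof.
rewrite -bigcap_setU1; congr bigcap; apply/seteqP; split => i /=.
  by rewrite in_cons => /orP [/eqP ->|]; [left|right].
by rewrite in_cons => -[->|->]; rewrite ?eqxx ?orbT.
Qed.

Lemma filtr_mono {d dS} {T : measurableType d} {S : measurableType dS}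
  (xi : nat -> T -> S) k k' : (k <= k')%N -> filtr xi k `<=` filtr xi k'.
Proof.
move=> kk'; apply: sub_sigma_algebra2 => _ [i [B [/andP[i0 ik] [mB ->]]]].
by exists i, B; rewrite i0 (leq_trans ik kk').
Qed.

Section past_independence.
Context {R : realType} {d dS} {T : measurableType d} {S : measurableType dS}
  {P : probability T R} {xi0 : T -> S} {xi : nat -> T -> S}.
Hypothesis iid : iid_copies P xi0 xi.

Lemma measurable_preimage_xi k B : (0 < k)%N -> measurable B ->
  measurable (xi k @^-1` B).
Proof.
have [_ [mxi _]] := iid.
by move=> k0 mB; rewrite -[X in measurable X]setTI; exact: mxi.
Qed.

Lemma filtr_measurable k : filtr xi k `<=` measurable.
Proof.
apply: smallest_sub; first exact: sigma_algebra_measurable.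
by move=> _ [i [B [/andP[i0 _] [mB ->]]]]; exact: measurable_preimage_xi.
Qed.

(* The pi-system of events determined by finitely many of xi_1, ..., xi_{k-1};
   on it, independence of xi_k is exactly the product rule of iid_copies. *)
Definition past_cylinders k : set (set T) :=
  [set A | exists (I : seq nat) (B : nat -> set S),
    [/\ uniq I, all (fun i => 0 < i < k)%N I, (forall i, measurable (B i)) &
        A = \bigcap_(i in [set` I]) (xi i @^-1` B i)]].

Lemma past_cylinders_measurable k : past_cylinders k `<=` measurable.
Proof.
move=> _ [I [B [_ allI mB ->]]]; elim: I allI => [_|a I IH] /=.
  by rewrite set_nil bigcap_set0.
case/andP=> /andP[a0 _] allI; rewrite bigcap_seq_cons.
by apply: measurableI; [exact: measurable_preimage_xi|exact: IH].
Qed.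

Lemma past_cylinders_setT k : past_cylinders k setT.
Proof. by exists [::], (fun=> setT); split => //; rewrite set_nil bigcap_set0. Qed.

Lemma past_cylinders_setI_closed k : setI_closed (past_cylinders k).
Proof.
move=> _ _ [I1 [B1 [_ all1 mB1 ->]]] [I2 [B2 [_ all2 mB2 ->]]].
pose B i := (if i \in I1 then B1 i else setT) `&` (if i \in I2 then B2 i else setT).
exists (undup (I1 ++ I2)), B; split.
- exact: undup_uniq.
- by apply/allP => i; rewrite mem_undup mem_cat => /orP[];
    [exact: (allP all1)|exact: (allP all2)].
- by move=> i; apply: measurableI; case: ifP.
apply/seteqP; split => w /=.
  move=> [h1 h2] i /=; rewrite mem_undup mem_cat /B /preimage /= => iI.
  by split; case: ifP => // ?; [exact: h1|exact: h2].
move=> h; split => i /= iI; have /= := h i.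
  by rewrite mem_undup mem_cat iI /B /preimage /= iI => /(_ isT) [].
by rewrite mem_undup mem_cat iI orbT /B /preimage /= iI => /(_ isT) [].
Qed.

Lemma filtr_sub_past_cylinders k : filtr xi k `<=` <<s past_cylinders k >>.
Proof.
apply: sub_sigma_algebra2 => _ [i [B [ik [mB ->]]]].
exists [:: i], (fun j => if j == i then B else setT); split => //=.
- by rewrite ik.
- by move=> j; case: ifP.
by rewrite set_cons1 bigcap_set1 eqxx.
Qed.

Lemma past_cylinders_indep k A B : (0 < k)%N -> past_cylinders k A ->
  measurable B -> (P (A `&` xi k @^-1` B) = P A * P (xi k @^-1` B))%E.
Proof.
have [_ [_ [_ prod_rule]]] := iid.
move=> k0 [I [B' [uI allI mB' ->]]] mB.
have kI : k \notin I by apply/negP => /(allP allI); rewrite ltnn andbF.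
have allI0 : all (fun i => 0 < i)%N I by apply: sub_all allI => i /andP[].
pose B'' j := if j == k then B else B' j.
have B''E : {in I, B'' =1 B'}.
  by move=> i iI; rewrite /B''; case: eqP iI => // ->; rewrite (negbTE kI).
have -> : \bigcap_(i in [set` I]) (xi i @^-1` B' i) `&` xi k @^-1` B =
    \bigcap_(i in [set` (k :: I)]) (xi i @^-1` B'' i).
  rewrite bigcap_seq_cons setIC; congr (_ `&` _); first by rewrite /B'' eqxx.
  by apply: eq_bigcapr => i iI; rewrite B''E.
rewrite !prod_rule //= ?kI ?uI ?k0 //; last by move=> j; rewrite /B''; case: ifP.
rewrite big_cons /B'' eqxx muleC; congr (_ * _)%E.
by apply: eq_big_seq => i iI; rewrite -/(B'' i) B''E.
Qed.

(* Both sides are finite measures of A agreeing on the pi-system of past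
   cylinders, hence on the generated sigma-algebra. *)
Lemma filtr_indep k A B : (0 < k)%N -> filtr xi k A -> measurable B ->
  (P (A `&` xi k @^-1` B) = P A * P (xi k @^-1` B))%E.
Proof.
move=> k0 kA mB.
have mV : measurable (xi k @^-1` B) by exact: measurable_preimage_xi.
have PV : P (xi k @^-1` B) = (fine (P (xi k @^-1` B)))%:E.
  by rewrite fineK // fin_num_measure.
have PV0 : (0 <= fine (P (xi k @^-1` B)))%R by rewrite fine_ge0.
pose m1 := mrestr P mV.
pose m2 := mscale (NngNum PV0) P.
have m12 C : past_cylinders k C -> m1 C = m2 C.
  by move=> kC; rewrite /m1 /m2 /mrestr /mscale /= -PV muleC past_cylinders_indep.
have m1_fin (_ : nat) : (m1 [set: T] < +oo)%E.
  by rewrite /m1 /mrestr setTI (le_lt_trans (probability_le1 P mV)) ?ltry.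
have cover : \bigcup_(i : nat) [set: T] = [set: T].
  by apply/seteqP; split => // w _; exists 0%N.
have m12A := @g_sigma_algebra_measure_unique _ _ _ _ (@past_cylinders_measurable k)
  (fun=> setT) (fun=> past_cylinders_setT k) cover m1 m2
  (@past_cylinders_setI_closed k) m12 m1_fin A (@filtr_sub_past_cylinders k _ kA).
transitivity (m2 A); first exact: m12A.
by rewrite /m2 /mscale /= -PV muleC.
Qed.

End past_independence.

Lemma meas_wrt_g_sigma {R : realType} {d} {T : measurableType d} (G0 : set (set T))
    (f : T -> R) :
  meas_wrt <<s G0 >> f -> measurable_fun [set: g_sigma_algebraType G0] f.
Proof. by move=> mf _ B mB; rewrite setTI; exact: mf. Qed.

Lemma meas_wrt_measurable_fun {R : realType} {d} {T : measurableType d}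
    (Fs : set (set T)) (f : T -> R) :
  Fs `<=` measurable -> meas_wrt Fs f -> measurable_fun setT f.
Proof. by move=> Fs_meas mf _ B mB; rewrite setTI; exact/Fs_meas/mf. Qed.

Lemma eq_measure_integrable {R : realType} {d} {T : measurableType d}
    (m1 m2 : {measure set T -> \bar R}) (D : set T) (f : T -> \bar R) :
  measurable D -> (forall A, measurable A -> m1 A = m2 A) ->
  m1.-integrable D f -> m2.-integrable D f.
Proof.
move=> mD m12 /integrableP [mf f_fin]; apply/integrableP; split => //.
by rewrite (eq_measure_integral m1) // => A mA _; rewrite m12.
Qed.

(* The integral over A against P is computed on the product of the law of
   (the identity on the coarse sigma-algebra <<s G0 >>) and the law of Xi,
   which is the joint law by independence; Fubini then integrates out Xi. *)
Section integral_indep.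
Context {R : realType} {d dS : measure_display} {T : measurableType d}
  {S : measurableType dS} {P : probability T R} {G0 : set (set T)} {Xi : T -> S}.
Hypothesis G0_measurable : <<s G0 >> `<=` measurable.
Hypothesis mXi : measurable_fun setT Xi.
Hypothesis G0_indep : forall A B, <<s G0 >> A -> measurable B ->
  (P (A `&` Xi @^-1` B) = P A * P (Xi @^-1` B))%E.

Local Notation TG := (g_sigma_algebraType G0).

Definition coarsen : T -> TG := id.

Lemma measurable_coarsen : measurable_fun setT coarsen.
Proof. by move=> _ B mB; rewrite setTI; exact: G0_measurable. Qed.

HB.instance Definition _ := @isMeasurableFun.Build _ _ T TG coarsen measurable_coarsen.

Definition Xi_mfun : T -> S := Xi.
HB.instance Definition _ := @isMeasurableFun.Build _ _ T S Xi_mfun mXi.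

Definition pair_Xi (w : T) : TG * S := (coarsen w, Xi_mfun w).

Lemma measurable_pair_Xi : measurable_fun setT pair_Xi.
Proof. exact: measurable_fun_pair measurable_coarsen mXi. Qed.

HB.instance Definition _ := @isMeasurableFun.Build _ _ T (TG * S)%type pair_Xi
  measurable_pair_Xi.

Local Notation Q := (distribution P coarsen).
Local Notation L := (distribution P Xi_mfun).
Local Notation M := (distribution P pair_Xi).

Lemma distribution_pair_Xi_prod C : measurable C -> (Q \x L)%E C = M C.
Proof. by apply: product_measure_unique => A B mA mB; exact: G0_indep. Qed.

Lemma integral_coarsen (g : TG -> \bar R) : measurable_fun [set: TG] g ->
  (\int[Q]_a g a = \int[P]_w g w)%E.
Proof.
move=> mg; rewrite integralE [RHS]integralE !ge0_integral_pushforward //.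
  exact: measurable_funeneg.
exact: measurable_funepos.
Qed.

Lemma integral_pair_Xi (phi : TG * S -> \bar R) :
  measurable_fun setT phi -> P.-integrable setT (phi \o pair_Xi) ->
  measurable_fun setT (fubini_F L phi) ->
  (\int[P]_w phi (w, Xi w) = \int[P]_w fubini_F L phi w)%E.
Proof.
move=> mphi iphi mF.
have iM : M.-integrable setT phi by exact: integrable_pushforward.
have iQL : (Q \x L)%E.-integrable setT phi.
  by apply: eq_measure_integrable iM => // C mC; exact/esym/distribution_pair_Xi_prod.
rewrite -(integral_coarsen _ mF) integral12_prod_meas1 //.
rewrite (eq_measure_integral M) => [|C mC _]; last exact: distribution_pair_Xi_prod.
by rewrite integral_distribution.
Qed.

Lemma integral_law_dotp {m : nat} (h : S -> 'rV[R]_m) (c u : 'rV[R]_m) (r : R) :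
  (forall i, measurable_fun setT (fun s => h s ord0 i)) ->
  (forall i, P.-integrable setT (EFin \o (fun w => h (Xi w) ord0 i))) ->
  (forall i, \int[P]_w (h (Xi w) ord0 i)%:E = (c ord0 i)%:E)%E ->
  (\int[L]_s (r * dotp u (h s))%:E = (r * dotp u c)%:E)%E.
Proof.
move=> mh ih Eh.
have iL i : L.-integrable setT (EFin \o (fun s => h s ord0 i)).
  by apply: integrable_pushforward => //; [exact/measurable_EFinP/mh|exact: ih].
have Lh i : (\int[L]_s (h s ord0 i)%:E = (c ord0 i)%:E)%E.
  rewrite integral_distribution; first exact: Eh.
    exact/measurable_EFinP/mh.
  exact: ih.
under eq_integral => s _.
  rewrite /dotp mulr_sumr -sumEFin.
  under eq_bigr => i _ do rewrite mulrA EFinM.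
  over.
rewrite /= integral_sum //; last by move=> i; apply: integrableZl => //; exact: iL.
rewrite /dotp mulr_sumr -sumEFin; apply: eq_bigr => i _.
rewrite integralZl //; last exact: iL.
by rewrite Lh mulrA EFinM.
Qed.

Lemma integral_dotp_indep {m : nat} (f : T -> 'rV[R]_m) (h : S -> 'rV[R]_m)
    (c : 'rV[R]_m) A :
  (forall i, meas_wrt <<s G0 >> (fun w => f w ord0 i)) ->
  (forall i, measurable_fun setT (fun s => h s ord0 i)) ->
  (forall i, P.-integrable setT (EFin \o (fun w => h (Xi w) ord0 i))) ->
  (forall i, \int[P]_w (h (Xi w) ord0 i)%:E = (c ord0 i)%:E)%E ->
  P.-integrable setT (EFin \o (fun w => dotp (f w) (h (Xi w)))) ->
  <<s G0 >> A ->
  (\int[P]_(w in A) (dotp (f w) (h (Xi w)))%:E =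
   \int[P]_(w in A) (dotp (f w) c)%:E)%E.
Proof.
move=> mf mh ih Eh ifh G0A.
have mfG i : measurable_fun [set: TG] (fun a : TG => f a ord0 i).
  exact: meas_wrt_g_sigma.
have m1A : measurable_fun [set: TG] (fun a : TG => \1_A a : R).
  exact: (@measurable_indic _ TG R setT A G0A).
pose phi (z : TG * S) := ((\1_A z.1 : R) * dotp (f z.1) (h z.2))%:E.
have phiE a : fubini_F L phi a = ((\1_A a : R) * dotp (f a) c)%:E.
  by rewrite /fubini_F /phi /=; exact: integral_law_dotp mh ih Eh.
rewrite [LHS](integral_mkcond A) [RHS](integral_mkcond A) !epatch_indic.
under eq_integral do rewrite /= -EFinM mulrC.
have mphi : measurable_fun setT phi.
  apply/measurable_EFinP; apply: measurable_funM; first exact: measurableT_comp m1A _.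
  apply: measurable_sum => i; apply: measurable_funM.
    exact: measurableT_comp (mfG i) measurable_fst.
  exact: measurableT_comp (mh i) measurable_snd.
transitivity (\int[P]_w phi (w, Xi w))%E; first by [].
rewrite integral_pair_Xi //.
- by apply: eq_integral => w _; rewrite phiE /= mulrC.
- apply: le_integrable ifh => //; first exact: measurableT_comp mphi measurable_pair_Xi.
  move=> w _; rewrite /= /phi /= lee_fin normrM -[leRHS]mul1r ler_wpM2r //.
  by rewrite indicE; case: (w \in A); rewrite ?normr1 ?normr0.
rewrite (funext phiE); apply/measurable_EFinP; apply: measurable_funM => //.
by apply: measurable_sum => i; exact: measurable_funM (mfG i) (measurable_cst _).
Qed.

End integral_indep.

Section integral_equal_laws.
Context {R : realType} {d dS : measure_display} {T : measurableType d}
  {S : measurableType dS} {P : probability T R} {X1 X2 : T -> S} {g : S -> R}.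
Hypotheses (mX1 : measurable_fun setT X1) (mX2 : measurable_fun setT X2).
Hypothesis same_law : forall B, measurable B -> P (X1 @^-1` B) = P (X2 @^-1` B).
Hypothesis mg : measurable_fun setT g.

Definition X1_mfun : T -> S := X1.
HB.instance Definition _ := @isMeasurableFun.Build _ _ T S X1_mfun mX1.
Definition X2_mfun : T -> S := X2.
HB.instance Definition _ := @isMeasurableFun.Build _ _ T S X2_mfun mX2.

Lemma integrable_same_law : P.-integrable setT (EFin \o (g \o X1)) ->
  P.-integrable setT (EFin \o (g \o X2)).
Proof.
have mg_abs : measurable_fun setT (fun s => `|(g s)%:E|)%E.
  by apply/measurable_EFinP; exact: measurableT_comp mg.
move=> /integrableP [_ fin1]; apply/integrableP; split.
  by apply/measurable_EFinP; exact: measurableT_comp mg mX2.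
rewrite [X in (X < _)%E](_ : _ = \int[distribution P X2_mfun]_s `|(g s)%:E|)%E; last first.
  by rewrite ge0_integral_distribution.
rewrite (eq_measure_integral (distribution P X1_mfun)) => [|B mB _]; last exact/esym/same_law.
by rewrite ge0_integral_distribution.
Qed.

Lemma integral_same_law : P.-integrable setT (EFin \o (g \o X1)) ->
  (\int[P]_w (g (X2 w))%:E = \int[P]_w (g (X1 w))%:E)%E.
Proof.
move=> i1; have i2 := integrable_same_law i1.
have mgE : measurable_fun setT (EFin \o g) by exact/measurable_EFinP.
rewrite -[LHS](integral_distribution (X := X2_mfun) mgE i2).
rewrite -[RHS](integral_distribution (X := X1_mfun) mgE i1).
by apply: eq_measure_integral => B mB _; exact/esym/same_law.
Qed.

End integral_equal_laws.

Lemma integral_dotp_le {R : realType} {d} {T : measurableType d}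
    (mu : {measure set T -> \bar R}) {m : nat} (D : set T) (v : T -> 'rV[R]_m)
    (g : 'rV[R]_m) (c : R) :
  measurable D -> (forall i, measurable_fun D (fun w => v w ord0 i)) ->
  mu.-integrable D (EFin \o (fun w => enorm (v w))) ->
  (forall w, D w -> dotp (v w) g <= c * enorm (v w)) ->
  (\int[mu]_(w in D) (dotp (v w) g)%:E <= c%:E * \int[mu]_(w in D) (enorm (v w))%:E)%E.
Proof.
move=> mD mv iv vg_le.
set C := \sum_i `|g ord0 i|.
have C0 : 0 <= C by exact: sumr_ge0.
have idot : mu.-integrable D (EFin \o (fun w => dotp (v w) g)).
  apply: (le_integrable mD) (integrableZl mD C iv) => //.
    apply/measurable_EFinP; apply: measurable_sum => i.
    exact: measurable_funM (mv i) (measurable_cst _).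
  move=> w _ /=; rewrite lee_fin (ger0_norm (mulr_ge0 C0 (enorm_ge0 _))).
  exact: normr_dotp_le.
rewrite -integralZl //; apply: le_integral => //; first by apply: (integrableZl mD).
by move=> w /[!inE] Dw; rewrite -EFinM lee_fin vg_le.
Qed.

Section cond_exp_le.
Context {R : realType} {d} {T : measurableType d} {P : probability T R}
  {G0 : set (set T)}.
Hypothesis G0_measurable : <<s G0 >> `<=` measurable.

Lemma cond_exp_le_ae {U V Y1 Y2 : T -> R} {c : R} :
  is_cond_exp P <<s G0 >> U Y1 -> is_cond_exp P <<s G0 >> V Y2 ->
  (forall A, <<s G0 >> A ->
     \int[P]_(w in A) (U w)%:E <= c%:E * \int[P]_(w in A) (V w)%:E)%E ->
  {ae P, forall w, Y1 w <= c * Y2 w}.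
Proof.
move=> [_ [mY1 [iY1 Y1E]]] [_ [mY2 [iY2 Y2E]]] UV.
pose Z w := Y1 w - c * Y2 w.
have mZ : measurable_fun [set: g_sigma_algebraType G0] Z.
  apply: measurable_funB; first exact: meas_wrt_g_sigma.
  by apply: measurable_funM; [exact: measurable_cst|exact: meas_wrt_g_sigma].
set A0 := [set w | 0 < Z w].
have G0A0 : <<s G0 >> A0.
  rewrite (_ : A0 = Z @^-1` `]0, +oo[%classic).
    by have := mZ measurableT _ (measurable_itv `]0, +oo[); rewrite setTI.
  by apply/seteqP; split => w /=; rewrite in_itv /= andbT.
have mA0 := G0_measurable _ G0A0.
have iA0 f : P.-integrable setT (EFin \o f) -> P.-integrable A0 (EFin \o f).
  exact: integrableS measurableT mA0 (@subsetT _ _).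
have iY2c : P.-integrable A0 (EFin \o (fun w => c * Y2 w)).
  apply: (eq_integrable mA0 _ _ _ (integrableZl mA0 c (iA0 _ iY2))).
  by move=> w _; rewrite /= EFinM.
have intZ_le0 : (\int[P]_(w in A0) (Z w)%:E <= 0)%E.
  under eq_integral do rewrite EFinB.
  rewrite integralB_EFin // ?iA0 //.
  under [X in (_ - X)%E]eq_integral do rewrite EFinM.
  by rewrite integralZl ?iA0 // Y1E // Y2E // sube_le0 UV.
(* Z is nonnegative on A0 with nonpositive integral, so it vanishes a.e. there. *)
have Z_abs0 : (\int[P]_(w in A0) `|(EFin \o Z) w| = 0)%E.
  apply/eqP; rewrite eq_le integral_ge0 ?andbT => [|w _]; last exact: abse_ge0.
  rewrite (eq_integral (fun w => (Z w)%:E)) // => w /[!inE] A0w.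
  by rewrite /= ger0_norm // ltW.
have mZT : measurable_fun A0 (EFin \o Z).
  apply/measurable_funTS/measurable_EFinP; apply: measurable_funB.
    exact: meas_wrt_measurable_fun mY1.
  apply: measurable_funM; first exact: measurable_cst.
  exact: meas_wrt_measurable_fun mY2.
apply: filterS ((ae_eq_integral_abs P mA0 mZT).1 Z_abs0) => w Z0.
rewrite leNgt -subr_gt0; apply/negP => Zw.
by move: (Z0 Zw) => /= /eqP; rewrite eqe gt_eqF.
Qed.

End cond_exp_le.

Theorem lemma3p3 (R : realType) (d dS : measure_display)
  (T : measurableType d) (P : probability T R) (S : measurableType dS)
  (n m : nat) (X O : set 'rV[R]_n) (K : set 'rV[R]_m)
  (F : 'rV[R]_n -> S -> R) (G : 'rV[R]_n -> S -> 'rV[R]_m)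
  (gradF : 'rV[R]_n -> S -> 'rV[R]_n) (DG : 'rV[R]_n -> S -> 'M[R]_(n, m))
  (xi0 : T -> S) (xi : nat -> T -> S) (sigma : R) (x1 : 'rV[R]_n)
  (x : nat -> T -> 'rV[R]_n) (y : nat -> T -> 'rV[R]_m) :
  (* standing assumptions *)
  closed K -> convex_set K -> is_cone K ->
  X !=set0 -> convex_set X -> compact X ->
  open O -> convex_set O -> X `<=` O ->
  (forall s z, O z -> differentiable (fun u => F u s) z /\
     forall h, 'd (fun u => F u s) z h = dotp (gradF z s) h) ->
  (forall s z, O z -> differentiable (fun u => G u s) z /\
     forall h, 'd (fun u => G u s) z h = h *m DG z s) ->
  (* the expectations defining f, g and their derivatives exist *)
  (forall z, O z ->
     measurable_fun setT (F z) /\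
     (forall i, measurable_fun setT (fun s => G z s ord0 i)) /\
     (forall i, measurable_fun setT (fun s => gradF z s ord0 i)) /\
     (forall i j, measurable_fun setT (fun s => DG z s i j)) /\
     P.-integrable setT (EFin \o (fun w => F z (xi0 w))) /\
     (forall i, P.-integrable setT (EFin \o (fun w => G z (xi0 w) ord0 i))) /\
     (forall i, P.-integrable setT (EFin \o (fun w => gradF z (xi0 w) ord0 i))) /\
     (forall i j, P.-integrable setT (EFin \o (fun w => DG z (xi0 w) i j)))) ->
  (* (A1) *)
  iid_copies P xi0 xi ->
  (* (C1), with f(z) = E[F(z,xi)] and g(z) = E[G(z,xi)] *)
  (forall z, O z ->
     differentiable (fun u => Escal P xi0 (F u)) z /\
     (forall h, 'd (fun u => Escal P xi0 (F u)) z h = dotp (Emx P xi0 (gradF z)) h) /\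
     differentiable (fun u => Emx P xi0 (G u)) z /\
     (forall h, 'd (fun u => Emx P xi0 (G u)) z h = h *m Emx P xi0 (DG z))) ->
  (* the LSAAL iterates *)
  LSAAL X K F G gradF DG sigma x1 xi x y ->
  (* (x^k, y^k) is F_k-measurable *)
  (forall k, (0 < k)%N ->
     (forall i, meas_wrt (filtr xi k) (fun w => x k w ord0 i)) /\
     (forall i, meas_wrt (filtr xi k) (fun w => y k w ord0 i))) ->
  (* (D4) with the Slater point xhat *)
  forall xhat : 'rV[R]_n,
  interior X xhat -> interior K (Emx P xi0 (G xhat)) ->
  exists2 eps0 : R, 0 < eps0 &
    forall k kt : nat, (0 < kt)%N -> (kt <= k.-1)%N ->
    forall Y1 Y2 : T -> R,
      is_cond_exp P (filtr xi kt) (fun w => dotp (y k w) (G xhat (xi k w))) Y1 ->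
      is_cond_exp P (filtr xi kt) (fun w => enorm (y k w)) Y2 ->
      {ae P, forall w, Y1 w <= - eps0 * Y2 w}.
Proof.
move=> _ _ _ _ _ _ _ _ XO _ _ integ iid _ lsaal adapted xhat xhat_int g_int.
have [eps eps0 polar_le] := interior_polar_dotp_le _ _ g_int.
exists eps => // k kt kt0 ktk Y1 Y2 Y1_ce Y2_ce.
have ktk' : (kt <= k)%N := leq_trans ktk (leq_pred k).
have k0 : (0 < k)%N := leq_trans kt0 ktk'.
have [_ [mG [_ [_ [_ [iG _]]]]]] := integ xhat (XO _ (interior_subset xhat_int)).
have [mxi0 [mxi [law _]]] := iid.
have law_k B : measurable B -> P (xi0 @^-1` B) = P (xi k @^-1` B).
  by move=> mB; rewrite law.
have iGk i := integrable_same_law mxi0 (mxi k k0) law_k (mG i) (iG i).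
have EGk i : (\int[P]_w (G xhat (xi k w) ord0 i)%:E =
    (Emx P xi0 (G xhat) ord0 i)%:E)%E.
  rewrite mxE /Escal unlock fineK ?(integrable_fin_num _ (iG i)) //.
  exact: integral_same_law mxi0 (mxi k k0) law_k (mG i) (iG i).
have [_ my] := adapted k k0.
apply: (cond_exp_le_ae (filtr_measurable iid kt) Y1_ce Y2_ce).
move=> A ktA.
have kA : filtr xi k A by move: ktA; exact: filtr_mono.
rewrite (integral_dotp_indep (filtr_measurable iid k) (mxi k k0)
  (fun A B => filtr_indep iid k A B k0) (y k) (G xhat) _ A my mG iGk EGk Y1_ce.1 kA).
apply: integral_dotp_le => [|i||w _].
- exact: filtr_measurable iid kt _ ktA.
- apply: measurable_funTS; exact: meas_wrt_measurable_fun (filtr_measurable iid k) (my i).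
- exact: integrableS measurableT (filtr_measurable iid kt _ ktA) (@subsetT _ _) Y2_ce.1.
- exact: polar_le (LSAAL_y_polar lsaal k w k0).
Qed.
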